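(* There is a 2-player, 2-action, 1-state Markov game with horizon $2$ and a non-Markov (general) policy $\sigma_2$ for player 2 such that for all Markov policies $\sigma_1$ of player 1, $V_1^{\sigma_1\times\sigma_2}=1/2$, yet $\max_{\sigma_1}V_1^{\sigma_1\times\sigma_2}=3/4$, where the maximum is over all (randomized, possibly non-Markov) general policies $\sigma_1$ of player 1.
   Context: An $m$-player finite-horizon Markov game is $\mathcal{G}=(\mathcal{S},H,(\mathcal{A}_i)_{i\in[m]},\mathbb{P},(R_i)_{i\in[m]},\mu)$ with finite states, horizon $H$, finite action sets, transition kernels, deterministic rewards $R_{i,h}(s,\mathbf{a})\in[-1/H,1/H]$, and initial distribution $\mu$. In an episode agents choose actions simultaneously at each step, each agent $i$ observes its own reward $r_{i,h}=R_{i,h}(s_h,\mathbf{a}_h)$, and the state transitions. A general policy of agent $i$ maps its history $(s_1,a_{i,1},r_{i,1},\dots,s_{h-1},a_{i,h-1},r_{i,h-1})$ and current state $s_h$ to a distribution over its actions; a Markov policy depends only on $h$ and $s_h$. $V_1^{\sigma_1\times\sigma_2}$ is player 1's expected total reward when players independently follow $\sigma_1,\sigma_2$. *)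

From HB Require Import structures.
From mathcomp Require Import all_boot all_order all_algebra.
Set Implicit Arguments. Unset Strict Implicit. Unset Printing Implicit Defensive.
Import Order.TTheory GRing.Theory Num.Theory.
Local Open Scope ring_scope.

Section MarkovGame.
Variable R : realFieldType.

Definition is_distr (T : finType) (p : {ffun T -> R}) : Prop :=
  (forall x, 0 <= p x) /\ \sum_(x : T) p x = 1.

(* A two-player Markov game with state set S, action sets A1, A2, horizon H.
   Steps are indexed h = 0, ..., H-1 (i.e. step h+1 of the paper). *)
Record mgame (S A1 A2 : finType) (H : nat) := MGame {
  trans : nat -> S -> A1 -> A2 -> {ffun S -> R};
  rew1  : nat -> S -> A1 -> A2 -> R;
  rew2  : nat -> S -> A1 -> A2 -> R;
  init  : {ffun S -> R} }.

Definition valid_game (S A1 A2 : finType) (H : nat) (G : mgame S A1 A2 H) : Prop :=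
  (forall h s a1 a2, is_distr (trans G h s a1 a2)) /\
  is_distr (init G) /\
  (forall h s a1 a2, - (H%:R)^-1 <= rew1 G h s a1 a2 <= (H%:R)^-1) /\
  (forall h s a1 a2, - (H%:R)^-1 <= rew2 G h s a1 a2 <= (H%:R)^-1).

(* A general policy of a player with action set A maps its own history
   (s_1, a_1, r_1, ..., s_{h-1}, a_{h-1}, r_{h-1}) and current state s_h
   to a distribution over actions. *)
Definition policy (S A : finType) := seq (S * A * R) -> S -> {ffun A -> R}.

Definition is_policy (S A : finType) (pi : policy S A) : Prop :=
  forall hist s, is_distr (pi hist s).

(* Markov policy: depends only on the step h (= length of history) and s_h *)
Definition is_markov (S A : finType) (pi : policy S A) : Prop :=
  exists f : nat -> S -> {ffun A -> R}, forall hist s, pi hist s = f (size hist) s.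

Fixpoint val1_from (S A1 A2 : finType) (H : nat) (G : mgame S A1 A2 H)
    (p1 : policy S A1) (p2 : policy S A2) (k h : nat)
    (hist1 : seq (S * A1 * R)) (hist2 : seq (S * A2 * R)) (s : S) : R :=
  match k with
  | 0 => 0
  | k'.+1 =>
    \sum_(a1 : A1) \sum_(a2 : A2)
      (p1 hist1 s a1 * p2 hist2 s a2) *
      (rew1 G h s a1 a2 +
       \sum_(s' : S) trans G h s a1 a2 s' *
          val1_from G p1 p2 k' h.+1
            (rcons hist1 (s, a1, rew1 G h s a1 a2))
            (rcons hist2 (s, a2, rew2 G h s a1 a2)) s')
  end.

Definition V1 (S A1 A2 : finType) (H : nat) (G : mgame S A1 A2 H)
    (p1 : policy S A1) (p2 : policy S A2) : R :=
  \sum_(s : S) init G s * val1_from G p1 p2 H 0 [::] [::] s.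

End MarkovGame.

From HB Require Import structures.
From mathcomp Require Import all_boot all_order all_algebra.
From mathcomp Require Import lra.
Set Implicit Arguments. Unset Strict Implicit. Unset Printing Implicit Defensive.
Import Order.TTheory GRing.Theory Num.Theory.
Local Open Scope ring_scope.

(* Player 2 tosses a fair coin at the first step and repeats its outcome at the
   second; player 1 earns 1/2 whenever its action matches player 2's.  The first
   step is worth 1/4 to player 1 whatever it does.  A Markov player 1 acts at the
   second step independently of the coin, so it gains 1/4 again.  But player 1's
   first reward tells it whether it matched, which reveals the coin, so a
   history-dependent player 1 matches surely at the second step and gets
   1/4 + 1/2 = 3/4, the largest possible value. *)

Lemma sum_unit (V : nmodType) (F : unit -> V) : \sum_(s : unit) F s = F tt.
Proof. by rewrite (big_pred1 tt) // => -[]. Qed.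

Section Distributions.
Variable R : realFieldType.

Definition point_distr (T : finType) (a : T) : {ffun T -> R} := [ffun b => (b == a)%:R].

Definition unif_distr (T : finType) : {ffun T -> R} := [ffun _ => #|T|%:R^-1].

Lemma is_distr_point (T : finType) (a : T) : is_distr (point_distr a).
Proof.
split=> [b|]; first by rewrite ffunE ler0n.
by rewrite (bigD1 a) //= big1 => [|b /negbTE]; rewrite ffunE ?eqxx ?addr0 // => ->.
Qed.

Lemma is_distr_unif (T : finType) : (0 < #|T|)%N -> is_distr (unif_distr T).
Proof.
move=> T_gt0; split=> [x|]; first by rewrite ffunE invr_ge0 ler0n.
under eq_bigr do rewrite ffunE.
by rewrite sumr_const -[_ *+ _]mulr_natr mulVf // pnatr_eq0 -lt0n.
Qed.

Lemma distr_le1 (T : finType) (p : {ffun T -> R}) (x : T) : is_distr p -> p x <= 1.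
Proof.
case=> p_ge0 <-; rewrite (bigD1 x) //= lerDl.
by apply: sumr_ge0 => y _; apply: p_ge0.
Qed.

End Distributions.

Section RepeatedMatchingPennies.
Variable R : realFieldType.

Definition match_reward (a1 a2 : bool) : R := (a1 == a2)%:R / 2.

Definition matching_game : mgame R unit bool bool 2 :=
  @MGame R unit bool bool 2 (fun _ _ _ _ => point_distr R tt) (fun _ _ => match_reward)
        (fun _ _ _ _ => 0) (point_distr R tt).

Definition repeat_policy : policy R unit bool :=
  fun hist _ => if hist is (_, a, _) :: _ then point_distr R a else unif_distr R bool.

Definition infer_policy : policy R unit bool :=
  fun hist _ => if hist is (_, a, r) :: _ then point_distr R (if r == 0 then ~~ a else a)
                else unif_distr R bool.

Definition second_match (p1 : policy R unit bool) (a1 a2 : bool) : R :=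
  p1 [:: (tt, a1, match_reward a1 a2)] tt a2.

Lemma V1_repeat_policy (p1 : policy R unit bool) : is_distr (p1 [::] tt) ->
  V1 matching_game p1 repeat_policy =
  4^-1 + 4^-1 * \sum_(a1 : bool) \sum_(a2 : bool) p1 [::] tt a1 * second_match p1 a1 a2.
Proof.
case=> _; rewrite /V1 /second_match /=.
by rewrite !(sum_unit, big_bool, ffunE, card_bool) /match_reward /= => p_sum1; lra.
Qed.

Lemma matching_game_valid : valid_game matching_game.
Proof.
split; first by move=> *; exact: is_distr_point.
split; first exact: is_distr_point.
by split=> h s a1 a2; apply/andP; rewrite /= /match_reward; case: (a1 == a2); split=> /=; lra.
Qed.

Lemma repeat_policy_is_policy : is_policy repeat_policy.
Proof.
move=> [|[[s a] r] hist] s'; first by apply: is_distr_unif; rewrite card_bool.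
exact: is_distr_point.
Qed.

Lemma repeat_policy_not_markov : ~ is_markov repeat_policy.
Proof.
case=> f f_markov.
have := congr1 (fun p : {ffun bool -> R} => p true)
  (etrans (f_markov [:: (tt, true, 0)] tt) (esym (f_markov [:: (tt, false, 0)] tt))).
by rewrite /= !ffunE /=; apply/eqP; rewrite oner_eq0.
Qed.

Lemma infer_policy_is_policy : is_policy infer_policy.
Proof.
move=> [|[[s a] r] hist] s'; first by apply: is_distr_unif; rewrite card_bool.
exact: is_distr_point.
Qed.

Lemma second_match_infer_policy (a1 a2 : bool) : second_match infer_policy a1 a2 = 1.
Proof.
rewrite /second_match /match_reward /= ffunE.
by case: a1; case: a2; rewrite /= ?mul0r ?eqxx //= mul1r invr_eq0 pnatr_eq0.
Qed.

Lemma V1_markov_repeat_policy (p1 : policy R unit bool) :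
  is_policy p1 -> is_markov p1 -> V1 matching_game p1 repeat_policy = 1 / 2.
Proof.
move=> p1_distr [f p1_markov]; rewrite V1_repeat_policy //.
have [_ sum_f0] : is_distr (f 0%N tt) by rewrite -(p1_markov [::]).
have [_ sum_f1] : is_distr (f 1%N tt) by rewrite -(p1_markov [:: (tt, true, 0)]).
under eq_bigr do under eq_bigr do rewrite /second_match !p1_markov.
under eq_bigr do rewrite -mulr_sumr sum_f1 mulr1.
by rewrite sum_f0; lra.
Qed.

Lemma V1_infer_repeat_policy : V1 matching_game infer_policy repeat_policy = 3 / 4.
Proof.
rewrite V1_repeat_policy; last exact: infer_policy_is_policy.
under eq_bigr do under eq_bigr do rewrite second_match_infer_policy mulr1.
by rewrite !big_bool /= !ffunE card_bool; lra.
Qed.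

Lemma V1_repeat_policy_le (p1 : policy R unit bool) :
  is_policy p1 -> V1 matching_game p1 repeat_policy <= 3 / 4.
Proof.
move=> p1_distr; rewrite V1_repeat_policy //.
have [p0_ge0 p0_sum1] := p1_distr [::] tt.
suff : \sum_(a1 : bool) \sum_(a2 : bool) p1 [::] tt a1 * second_match p1 a1 a2 <= 2 by lra.
apply: le_trans (_ : \sum_(a1 : bool) \sum_(a2 : bool) p1 [::] tt a1 <= 2).
  apply: ler_sum => a1 _; apply: ler_sum => a2 _.
  by rewrite ler_piMr // distr_le1.
under eq_bigr do rewrite sumr_const card_bool.
by rewrite sumrMnl p0_sum1.
Qed.

End RepeatedMatchingPennies.

Theorem proposition6p1 (R : realFieldType) :
  exists G : mgame R unit bool bool 2,
    valid_game G /\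
    exists sigma2 : policy R unit bool,
      is_policy sigma2 /\ ~ is_markov sigma2 /\
      (forall sigma1 : policy R unit bool,
          is_policy sigma1 -> is_markov sigma1 -> V1 G sigma1 sigma2 = 1 / 2) /\
      (exists sigma1 : policy R unit bool,
          is_policy sigma1 /\ V1 G sigma1 sigma2 = 3 / 4) /\
      (forall sigma1 : policy R unit bool,
          is_policy sigma1 -> V1 G sigma1 sigma2 <= 3 / 4).
Proof.
exists (matching_game R); split; first exact: matching_game_valid.
exists (@repeat_policy R); split; first exact: repeat_policy_is_policy.
split; first exact: repeat_policy_not_markov.
split; first exact: V1_markov_repeat_policy.
split; last exact: V1_repeat_policy_le.
exists (@infer_policy R); split; [exact: infer_policy_is_policy | exact: V1_infer_repeat_policy].
Qed.
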